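(* Let $\mathbf{A}\in\mathbb{K}[X]^{m\times m}$ be nonsingular, $\mathbf{s}\in\mathbb{Z}^m$, and $\sigma\in\mathbb{N}$ with $\sigma>\deg(\det\mathbf{A})$. Let $\pi$ be a permutation of $\{1,\dots,m\}$ such that $\hat{\mathbf{s}}=(s_{\pi(1)},\dots,s_{\pi(m)})$ is non-decreasing; define $\hat{\mathbf{t}}$ by $\hat t_1=0$ and, for $2\le i\le m$, $\hat t_i-\hat t_{i-1}=\sigma$ if $\hat s_i-\hat s_{i-1}\ge\sigma$ and $\hat t_i-\hat t_{i-1}=\hat s_i-\hat s_{i-1}$ otherwise; and let $\mathbf{t}=(\hat t_{\pi^{-1}(1)},\dots,\hat t_{\pi^{-1}(m)})$. Then $\mathbf{t}\in\mathbb{N}^m$, $\min(\mathbf{t})=0$, $\max(\mathbf{t})\le(m-1)\sigma$, $t_1+\cdots+t_m\le m^2\sigma/2$, and the $\mathbf{s}$-Popov form of $\mathbf{A}$ is also in $\mathbf{t}$-Popov form.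
   Context: For $\mathbf{s}\in\mathbb{Z}^m$ and nonzero $\mathbf{p}=[p_j]\in\mathbb{K}[X]^{1\times m}$, the $\mathbf{s}$-degree of $\mathbf{p}$ is $\max_j(\deg p_j+s_j)$ and its $\mathbf{s}$-pivot index is the largest $j$ attaining it, with $p_j$ its pivot entry. A nonsingular matrix is in $\mathbf{s}$-Popov form if its $\mathbf{s}$-pivot entries are monic and on its diagonal and in each column the nonpivot entries have degree less than the pivot entry. The $\mathbf{s}$-Popov form of $\mathbf{A}$ is the unique matrix in $\mathbf{s}$-Popov form that is left-unimodularly equivalent to $\mathbf{A}$. *)

From HB Require Import structures.
From mathcomp Require Import all_boot all_order all_algebra all_fingroup.
Set Implicit Arguments. Unset Strict Implicit. Unset Printing Implicit Defensive.
Import Order.TTheory GRing.Theory Num.Theory.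
Local Open Scope ring_scope.

(* Indices are 0-based: 'I_m = {0,...,m-1} stands for {1,...,m}. *)

(* degree of a polynomial, as an integer (only used for nonzero p) *)
Definition pdeg (K : fieldType) (p : {poly K}) : int := (size p)%:Z - 1.

(* j is the s-pivot index of the nonzero row p: among nonzero entries,
   deg p_j + s_j is maximal (= the s-degree of p), and j is the largest
   index attaining it. *)
Definition is_spivot (K : fieldType) (m : nat) (s : 'I_m -> int)
    (p : 'I_m -> {poly K}) (j : 'I_m) : Prop :=
  p j != 0 /\
  forall k : 'I_m, p k != 0 ->
    pdeg (p k) + s k <= pdeg (p j) + s j /\
    ((j < k)%N -> pdeg (p k) + s k < pdeg (p j) + s j).

Definition is_sPopov (K : fieldType) (m : nat) (s : 'I_m -> int)
    (P : 'M[{poly K}]_m) : Prop :=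
  \det P != 0 /\
  (forall i : 'I_m, is_spivot s (fun j => P i j) i /\ P i i \is monic) /\
  (forall i j : 'I_m, i != j -> (size (P i j) < size (P j j))%N).

Definition left_unimod_equiv (K : fieldType) (m : nat)
    (A P : 'M[{poly K}]_m) : Prop :=
  exists U : 'M[{poly K}]_m, U \in unitmx /\ P = U *m A.

(* hat s_k = s_{pi(k)} for k < m (default 0 otherwise, never used) *)
Definition shat (m : nat) (s : 'I_m -> int) (pi : 'S_m) (k : nat) : int :=
  match insub k with Some i => s (pi i) | None => 0 end.

Definition that (m : nat) (s : 'I_m -> int) (pi : 'S_m) (sigma : nat)
    (k : nat) : int :=
  \sum_(1 <= l < k.+1)
     (let d := shat s pi l - shat s pi l.-1 in
      if sigma%:Z <= d then sigma%:Z else d).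

Definition tshift (m : nat) (s : 'I_m -> int) (pi : 'S_m) (sigma : nat)
    (j : 'I_m) : int :=
  that s pi sigma (pi^-1%g j).

From HB Require Import structures.
From mathcomp Require Import all_boot all_order all_algebra all_fingroup.
From mathcomp Require Import zify.
Set Implicit Arguments. Unset Strict Implicit. Unset Printing Implicit Defensive.
Import Order.TTheory GRing.Theory Num.Theory.
Local Open Scope ring_scope.

(* In an s-Popov form every column is dominated by its diagonal entry, so the
   diagonal term of the Leibniz expansion determines the degree of the
   determinant, and every entry has degree at most deg(det P) = deg(det A),
   hence below sigma.  The shift t differs from s only in that gaps of at
   least sigma between consecutive sorted entries of s are shrunk to sigma;
   since all entries of a row have degree below sigma, such a gap already
   decides any comparison of shifted degrees across it, and shrinking it to
   sigma does not change the outcome.  Hence every s-pivot is a t-pivot. *)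

Section ColumnDominantDeterminant.

Variables (R : idomainType) (n : nat) (P : 'M[{poly R}]_n).
Hypothesis diag_neq0 : forall i, P i i != 0.
Hypothesis col_dominant :
  forall i j, i != j -> (size (P i j) < size (P j j))%N.

Lemma size_prod_perm_lt (p : 'S_n) :
  p != 1%g -> (size (\prod_i P i (p i))%R < size (\prod_i P i i)%R)%N.
Proof.
move=> p_neq1.
have [j0 pj0] : exists j0, (p^-1)%g j0 != j0.
  apply/existsP; apply: contraR p_neq1; rewrite negb_exists => /forallP fixp.
  apply/eqP/permP => j; rewrite perm1.
  by have /negPn/eqP <- := fixp (p j); rewrite permK.
rewrite (reindex_inj (@perm_inj _ (p^-1)%g)) /=.
under eq_bigr => j _ do rewrite permKV.
apply: leq_ltn_trans (size_poly_prod_leq predT _) _.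
rewrite size_prod // !card_ord.
have sum_lt : (\sum_j size (P ((p^-1)%g j) j) < \sum_j size (P j j))%N.
  rewrite (bigD1 j0) //= [X in (_ < X)%N](bigD1 j0) //= -addSn.
  rewrite leq_add ?col_dominant //; apply: leq_sum => j _.
  by case: (eqVneq ((p^-1)%g j) j) => [-> // | /col_dominant/ltnW].
have n_le_sum : (n <= \sum_j size (P j j))%N.
  rewrite -[X in (X <= _)%N]card_ord -sum1_card.
  by apply: leq_sum => j _; rewrite size_poly_gt0.
by rewrite ltn_sub2r ?ltnS.
Qed.

Lemma size_det_col_dominant : size (\det P) = size (\prod_i P i i).
Proof.
have prod_neq0 : \prod_i P i i != 0 by apply/prodf_neq0.
rewrite /determinant (bigD1 1%g) //= odd_perm1 expr0 mul1r.
under [X in X + _]eq_bigr => i _ do rewrite perm1.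
rewrite size_polyDl //.
apply: (big_ind (fun q : {poly R} => (size q < size (\prod_i P i i)%R)%N)).
- by rewrite size_poly0 size_poly_gt0.
- move=> x y x_lt y_lt.
  by apply: leq_ltn_trans (size_polyD x y) _; rewrite gtn_max x_lt y_lt.
move=> p p_neq1; rewrite mulr_sign.
by case: ifP => _; rewrite ?size_polyN size_prod_perm_lt.
Qed.

Lemma size_entry_le_det i j : (size (P i j) <= size (\det P))%N.
Proof.
have size_jj : (size (P j j) <= size (\det P))%N.
  have rest_neq0 : \prod_(k | k != j) P k k != 0 by apply/prodf_neq0.
  rewrite size_det_col_dominant (bigD1 j) //= size_mul //.
  by move: rest_neq0; rewrite -size_poly_gt0 -subn1 => ?; rewrite -addnBA ?leq_addr.
case: (eqVneq i j) => [-> // | /col_dominant ij_lt].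
exact: leq_trans (ltnW ij_lt) size_jj.
Qed.

End ColumnDominantDeterminant.

Lemma left_unimod_equiv_size_det (K : fieldType) (m : nat)
    (A P : 'M[{poly K}]_m) :
  left_unimod_equiv A P -> size (\det P) = size (\det A).
Proof.
move=> [U [U_unit ->]]; rewrite det_mulmx.
move: U_unit; rewrite unitmxE poly_unitE => /andP [/eqP size_detU _].
have detU_neq0 : \det U != 0 by rewrite -size_poly_gt0 size_detU.
have [-> | detA_neq0] := eqVneq (\det A) 0; first by rewrite mulr0.
by rewrite size_mul // size_detU.
Qed.

Definition compressed_gap (sigma : nat) (ds dt : int) : Prop :=
  0 <= dt <= ds /\ (dt = ds \/ sigma%:Z <= dt).

Lemma compressed_gap0 sigma : compressed_gap sigma 0 0.
Proof. by split => //; left. Qed.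

Lemma compressed_gapD sigma ds1 dt1 ds2 dt2 :
  compressed_gap sigma ds1 dt1 -> compressed_gap sigma ds2 dt2 ->
  compressed_gap sigma (ds1 + ds2) (dt1 + dt2).
Proof. rewrite /compressed_gap; lia. Qed.

Lemma is_spivot_compressed (K : fieldType) (m sigma : nat)
    (s t : 'I_m -> int) (p : 'I_m -> {poly K}) (i : 'I_m) :
  (forall j k, compressed_gap sigma (s k - s j) (t k - t j) \/
               compressed_gap sigma (s j - s k) (t j - t k)) ->
  (forall k, (size (p k) <= sigma)%N) ->
  is_spivot s p i -> is_spivot t p i.
Proof.
move=> gaps size_le [pi_neq0 spiv]; split=> // k pk_neq0.
have [le_ki lt_ki] := spiv k pk_neq0.
have := size_le i; have := size_le k.
have := size_poly_gt0 (p i); have := size_poly_gt0 (p k).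
move: le_ki lt_ki; rewrite pi_neq0 pk_neq0 /pdeg.
case: (gaps i k) => -[/andP [? ?] ?] le_ki lt_ki ? ? ? ?;
  (split; [lia | by move=> /lt_ki; lia]).
Qed.

Lemma is_sPopov_compressed (K : fieldType) (m sigma : nat)
    (s t : 'I_m -> int) (P : 'M[{poly K}]_m) :
  (forall j k, compressed_gap sigma (s k - s j) (t k - t j) \/
               compressed_gap sigma (s j - s k) (t j - t k)) ->
  (forall i j, (size (P i j) <= sigma)%N) ->
  is_sPopov s P -> is_sPopov t P.
Proof.
move=> gaps size_le [detP_neq0 [piv col]]; split=> //; split=> // i.
have [spiv_i monic_i] := piv i; split=> //.
exact: is_spivot_compressed spiv_i.
Qed.

Lemma is_sPopov_size_entry_le_det (K : fieldType) (m : nat)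
    (s : 'I_m -> int) (P : 'M[{poly K}]_m) :
  is_sPopov s P -> forall i j, (size (P i j) <= size (\det P))%N.
Proof.
move=> [_ [piv col]]; apply: size_entry_le_det col => i.
by case: (piv i) => -[].
Qed.

Definition capped_step (sigma : nat) (d : int) : int :=
  if sigma%:Z <= d then sigma%:Z else d.

Lemma capped_step_le sigma d : capped_step sigma d <= sigma%:Z.
Proof. by rewrite /capped_step; case: ifP => // /negbT; rewrite -ltNge => /ltW. Qed.

Lemma compressed_gap_capped_step sigma d :
  0 <= d -> compressed_gap sigma d (capped_step sigma d).
Proof. rewrite /capped_step /compressed_gap; case: ifP; lia. Qed.

Section ShiftCompression.

Variables (m : nat) (s : 'I_m -> int) (pi : 'S_m) (sigma : nat).
Hypothesis s_sorted : forall i j : 'I_m, (i <= j)%N -> s (pi i) <= s (pi j).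

Local Notation shat := (shat s pi).
Local Notation that := (that s pi sigma).
Local Notation t := (tshift s pi sigma).

Lemma that0 : that 0 = 0.
Proof. by rewrite /that big_geq. Qed.

Lemma thatS k : that k.+1 = that k + capped_step sigma (shat k.+1 - shat k).
Proof. by rewrite /that big_nat_recr. Qed.

Lemma that_le k : that k <= (k * sigma)%:Z.
Proof.
elim: k => [|k IHk]; first by rewrite that0.
by rewrite thatS mulSn PoszD addrC lerD ?capped_step_le.
Qed.

Lemma shat_perm j : shat (pi^-1 j)%g = s j.
Proof.
rewrite /shat; case: insubP => [i _ ei | ]; last by rewrite ltn_ord.
by rewrite (val_inj ei) permKV.
Qed.

Lemma shat_le a b : (a <= b)%N -> (b < m)%N -> shat a <= shat b.
Proof.
move=> le_ab lt_bm; have lt_am := leq_ltn_trans le_ab lt_bm.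
rewrite /shat; case: insubP => [i _ ei | ]; last by rewrite lt_am.
by case: insubP => [j _ ej | ]; [apply: s_sorted; rewrite ei ej | rewrite lt_bm].
Qed.

Lemma that_compressed_gap a b : (a <= b)%N -> (b < m)%N ->
  compressed_gap sigma (shat b - shat a) (that b - that a).
Proof.
move=> /subnKC <-; elim: (b - a)%N => [|k IHk] lt_m.
  by rewrite addn0 !subrr; apply: compressed_gap0.
rewrite addnS thatS in lt_m *; have lt_km := ltnW lt_m.
have -> : shat (a + k).+1 - shat a =
          (shat (a + k) - shat a) + (shat (a + k).+1 - shat (a + k)).
  by lia.
rewrite [that _ + _ - _]addrAC; apply: compressed_gapD (IHk lt_km) _.
by apply: compressed_gap_capped_step; rewrite subr_ge0 shat_le.
Qed.

Lemma tshift_compressed_gap j k :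
  compressed_gap sigma (s k - s j) (t k - t j) \/
  compressed_gap sigma (s j - s k) (t j - t k).
Proof.
rewrite -[s j]shat_perm -[s k]shat_perm.
by case: (leqP (pi^-1 j)%g (pi^-1 k)%g) => [le | /ltnW le];
  [left | right]; apply: that_compressed_gap.
Qed.

Lemma tshift_ge0 j : 0 <= t j.
Proof.
have [] := that_compressed_gap (leq0n (pi^-1 j)%g) (ltn_ord _).
by rewrite that0 subr0 => /andP [].
Qed.

Lemma sum_that_le k : 2%:Z * (\sum_(a < k) that a) <= (k ^ 2 * sigma)%:Z.
Proof.
elim: k => [|k IHk]; first by rewrite big_ord0 mulr0.
rewrite big_ord_recr /=.
have := that_le k; move: IHk; set S := \sum_(a < k) _.
have -> : (k.+1 ^ 2 * sigma = k ^ 2 * sigma + 2 * (k * sigma) + sigma)%N.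
  by rewrite !expnS expn0; nia.
lia.
Qed.

Lemma sum_tshift : \sum_(j < m) t j = \sum_(a < m) that a.
Proof.
rewrite (reindex_inj (@perm_inj _ pi)) /=.
by apply: eq_bigr => j _; rewrite /tshift permK.
Qed.

End ShiftCompression.

Theorem mainTheorem12 (K : fieldType) (m : nat) (A : 'M[{poly K}]_m)
    (s : 'I_m -> int) (sigma : nat) (pi : 'S_m) :
  (0 < m)%N ->
  \det A != 0 ->
  ((size (\det A)).-1 < sigma)%N ->
  (forall i j : 'I_m, (i <= j)%N -> s (pi i) <= s (pi j)) ->
  let t := tshift s pi sigma in
  (forall j, 0 <= t j) /\
  (exists j, t j = 0) /\
  (forall j, t j <= ((m - 1) * sigma)%:Z) /\
  2%:Z * (\sum_(j < m) t j) <= (m ^ 2 * sigma)%:Z /\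
  (forall P : 'M[{poly K}]_m,
     is_sPopov s P -> left_unimod_equiv A P -> is_sPopov t P).
Proof.
move=> m_gt0 _ deg_lt s_sorted t.
split; first exact: tshift_ge0.
split; first by exists (pi (Ordinal m_gt0)); rewrite /t /tshift permK that0.
split.
  move=> j; apply: le_trans (that_le _ _ _ _) _.
  by rewrite lez_nat leq_mul2r; have := ltn_ord (pi^-1 j)%g; lia.
split; first by rewrite /t sum_tshift sum_that_le.
move=> P sPopov equiv.
have size_le i j : (size (P i j) <= sigma)%N.
  have := is_sPopov_size_entry_le_det sPopov i j.
  by rewrite (left_unimod_equiv_size_det equiv); lia.
exact: is_sPopov_compressed (tshift_compressed_gap sigma s_sorted) size_le sPopov.
Qed.
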